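(* Assume $\mu>\mu_{c_1}(D_1,D_2)$. Then system $( * )$ is uniformly persistent with respect to solutions with $N(0)>0$, $P(0)>0$, $Z(0)>0$: there exists $\varepsilon>0$ such that every such solution satisfies $\liminf_{t\to\infty}N(t)\ge\varepsilon$, $\liminf_{t\to\infty}P(t)\ge\varepsilon$ and $\liminf_{t\to\infty}Z(t)\ge\varepsilon$.
   Context: Standing setup. Let $D>0$, $D_1>0$, $D_2>0$, $\gamma_1>0$, $\gamma_2>0$ be constants and $\mu>0$ a parameter. Let $f_1,f_2:[0,\infty)\to[0,\infty)$ be continuously differentiable and bounded, with $f_i(0)=0$, $f_i'(x)>0$ for all $x\ge 0$, $\lim_{N\to\infty}f_1(N)>\max(D,D_1)/\gamma_1$ and $\lim_{P\to\infty}f_2(P)>\max(D,D_2)/\gamma_2$. The system $( * )$ is $$\frac{dN}{dt}=(\mu-N)D-Pf_1(N),\quad \frac{dP}{dt}=\gamma_1Pf_1(N)-D_1P-Zf_2(P),\quad \frac{dZ}{dt}=\gamma_2Zf_2(P)-D_2Z.$$ $\lambda_P(d)$ is the unique number with $f_1(\lambda_P(d))=d/\gamma_1$, $\lambda_Z(d)$ the unique number with $f_2(\lambda_Z(d))=d/\gamma_2$, and $\mu_{c_1}(D_1,D_2)=\lambda_P(D_1)+D_1\lambda_Z(D_2)/(D\gamma_1)$. *)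

From Stdlib Require Import Reals.
Open Scope R_scope.

Definition response_fun (f : R -> R) (thr : R) : Prop :=
  (forall x, 0 <= x -> 0 <= f x) /\
  f 0 = 0 /\
  (exists f' : R -> R,
      (forall x, 0 <= x -> derivable_pt_lim f x (f' x)) /\
      (forall x, 0 <= x -> continuity_pt f' x) /\
      (forall x, 0 <= x -> 0 < f' x)) /\
  (exists B, forall x, 0 <= x -> Rabs (f x) <= B) /\
  (exists L, thr < L /\
     forall eps, 0 < eps -> exists M, forall x, M <= x -> Rabs (f x - L) < eps).

(* mu_{c1}(D1,D2) = lambda_P(D1) + D1 lambda_Z(D2) / (D gamma1),
   given the values lamP = lambda_P(D1), lamZ = lambda_Z(D2). *)
Definition mu_c1 (D gamma1 D1 lamP lamZ : R) : R :=
  lamP + D1 * lamZ / (D * gamma1).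

Definition right_cont_at0 (u : R -> R) : Prop :=
  forall eps, 0 < eps -> exists delta, 0 < delta /\
    forall t, 0 <= t < delta -> Rabs (u t - u 0) < eps.

Definition is_solution (mu D D1 D2 gamma1 gamma2 : R) (f1 f2 : R -> R)
  (N P Z : R -> R) : Prop :=
  right_cont_at0 N /\ right_cont_at0 P /\ right_cont_at0 Z /\
  forall t, 0 < t ->
    derivable_pt_lim N t ((mu - N t) * D - P t * f1 (N t)) /\
    derivable_pt_lim P t (gamma1 * P t * f1 (N t) - D1 * P t - Z t * f2 (P t)) /\
    derivable_pt_lim Z t (gamma2 * Z t * f2 (P t) - D2 * Z t).

Definition liminf_ge (u : R -> R) (eps : R) : Prop :=
  forall delta, 0 < delta -> exists T, forall t, T <= t -> eps - delta <= u t.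

(* Positivity is preserved, and the weighted total
   N + P/g1 + Z/(g1 g2) eventually enters a fixed box.  Each species is then
   pushed up by one persistence principle: if x, corrected by a bounded term U,
   grows at a rate at least eps whenever x lies below a level c, then x is
   eventually above c - 2 sup|U|.  For N this is immediate; for ln P the
   correction is b Z + k (N - mu)^2; for ln Z it is the Lyapunov function
   k V + k2 (N + P/g1 - Q1)^2 of the predator-free subsystem, with
   V = g1 N - D1 int_lamP^N 1/f1 + P - P1 ln P, which decreases at a rate
   bounded away from 0 when P stays below lamZ < P1 (this is where
   mu > mu_c1 enters). *)

From Stdlib Require Import Reals Lra Classical.
From Coquelicot Require Import Coquelicot.
Open Scope R_scope.

Lemma dlim_eq_val f t a b : derivable_pt_lim f t a -> a = b -> derivable_pt_lim f t b.
Proof. now intros H <-. Qed.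

Lemma dlim_plus u v t a b : derivable_pt_lim u t a -> derivable_pt_lim v t b ->
  derivable_pt_lim (fun x => u x + v x) t (a + b).
Proof. apply derivable_pt_lim_plus. Qed.

Lemma dlim_minus u v t a b : derivable_pt_lim u t a -> derivable_pt_lim v t b ->
  derivable_pt_lim (fun x => u x - v x) t (a - b).
Proof. apply derivable_pt_lim_minus. Qed.

Lemma dlim_mult u v t a b : derivable_pt_lim u t a -> derivable_pt_lim v t b ->
  derivable_pt_lim (fun x => u x * v x) t (a * v t + u t * b).
Proof. apply derivable_pt_lim_mult. Qed.

Lemma dlim_scal c u t a : derivable_pt_lim u t a ->
  derivable_pt_lim (fun x => c * u x) t (c * a).
Proof. apply derivable_pt_lim_scal. Qed.

Lemma dlim_const c t : derivable_pt_lim (fun _ => c) t 0.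
Proof. apply derivable_pt_lim_const. Qed.

Lemma dlim_comp g u t a b : derivable_pt_lim u t a -> derivable_pt_lim g (u t) b ->
  derivable_pt_lim (fun x => g (u x)) t (b * a).
Proof. intros Hu Hg; exact (derivable_pt_lim_comp u g t a b Hu Hg). Qed.

Lemma dlim_ln u t a : 0 < u t -> derivable_pt_lim u t a ->
  derivable_pt_lim (fun x => ln (u x)) t (a / u t).
Proof.
  intros Hpos Hu. eapply dlim_eq_val.
  - apply dlim_comp; [exact Hu | apply derivable_pt_lim_ln; exact Hpos].
  - unfold Rdiv; ring.
Qed.

Lemma dlim_sqr u t a : derivable_pt_lim u t a ->
  derivable_pt_lim (fun x => (u x) ^ 2) t (2 * u t * a).
Proof.
  intros Hu. replace (2 * u t * a) with (INR 2 * u t ^ Nat.pred 2 * a) by (simpl; ring).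
  apply (dlim_comp (fun y => y ^ 2) u); [exact Hu | apply derivable_pt_lim_pow].
Qed.

Lemma dlim_exp_scal C t : derivable_pt_lim (fun r => exp (C * r)) t (C * exp (C * t)).
Proof.
  eapply dlim_eq_val.
  - apply (dlim_comp exp (fun r => C * r)); [| apply derivable_pt_lim_exp].
    eapply dlim_eq_val; [apply dlim_scal, derivable_pt_lim_id | reflexivity].
  - ring.
Qed.

Lemma Rmult_le_of_le_div c x a : 0 < c -> x <= a / c -> c * x <= a.
Proof.
  intros Hc Hx. apply (Rmult_le_compat_l c) in Hx; [| lra].
  replace (c * (a / c)) with a in Hx by (field; lra). exact Hx.
Qed.

Lemma dlim_continuity f t a : derivable_pt_lim f t a -> continuity_pt f t.
Proof. intros H. apply derivable_continuous_pt. now exists a. Qed.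

Lemma continuity_pt_ball f x : continuity_pt f x -> forall e, 0 < e ->
  exists d, 0 < d /\ forall y, Rabs (y - x) < d -> Rabs (f y - f x) < e.
Proof.
  intros H e He. destruct (H e He) as [d [Hd Hball]].
  exists d; split; [exact Hd |]. intros y Hy.
  destruct (Req_dec y x) as [-> | Hne].
  - unfold Rminus; rewrite Rplus_opp_r, Rabs_R0; exact He.
  - apply (Hball y). repeat split; auto.
Qed.

Lemma continuity_pt_pos_ball u s : continuity_pt u s -> 0 < u s ->
  exists d, 0 < d /\ forall r, Rabs (r - s) < d -> 0 < u r.
Proof.
  intros Hc Hpos. destruct (continuity_pt_ball u s Hc (u s) Hpos) as [d [Hd H]].
  exists d; split; [exact Hd |]. intros r Hr.
  specialize (H r Hr). apply Rabs_def2 in H. lra.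
Qed.

Lemma continuity_bounded_on (h : R -> R) (a b : R) :
  (forall c, a <= c <= b -> continuity_pt h c) ->
  exists B, forall c, a <= c <= b -> Rabs (h c) <= B.
Proof.
  intros Hc. destruct (Rle_or_lt a b) as [Hab | Hba].
  - destruct (continuity_ab_maj h a b Hab Hc) as [xM [HM _]].
    destruct (continuity_ab_min h a b Hab Hc) as [xm [Hm _]].
    exists (Rmax (Rabs (h xM)) (Rabs (h xm))). intros c Hcab. apply Rabs_le.
    specialize (HM c Hcab). specialize (Hm c Hcab).
    pose proof (RRle_abs (h xM)). pose proof (Rabs_Ropp (h xm)). pose proof (RRle_abs (- h xm)).
    pose proof (Rmax_l (Rabs (h xM)) (Rabs (h xm))). pose proof (Rmax_r (Rabs (h xM)) (Rabs (h xm))).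
    split; lra.
  - exists 0. intros c Hcab. lra.
Qed.

Lemma continuous_induction (A : R -> Prop) (a b : R) :
  a <= b -> A a ->
  (forall s, a <= s < b -> A s -> exists d, 0 < d /\ forall r, s <= r < s + d -> A r) ->
  (forall s, a < s <= b -> (forall r, a <= r < s -> A r) -> A s) ->
  forall s, a <= s <= b -> A s.
Proof.
  intros Hab HA Hstep Hsup.
  set (E := fun x => a <= x <= b /\ forall r, a <= r <= x -> A r).
  assert (HEa : E a) by (split; [lra | intros r Hr; replace r with a by lra; exact HA]).
  assert (Hbound : bound E) by (exists b; intros x [Hx _]; lra).
  destruct (completeness E Hbound (ex_intro _ a HEa)) as [m [Hub Hlub]].
  assert (Ham : a <= m) by (apply Hub; exact HEa).
  assert (Hmb : m <= b) by (apply Hlub; intros x [Hx _]; lra).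
  assert (Hbelow : forall r, a <= r < m -> A r).
  { intros r Hr. apply NNPP. intro HnA.
    assert (m <= r); [| lra].
    apply Hlub. intros x [Hx HxA]. destruct (Rle_or_lt x r) as [| Hrx]; [assumption |].
    exfalso. apply HnA, HxA. lra. }
  assert (HAm : A m).
  { destruct (Req_dec m a) as [-> | Hne]; [exact HA |]. apply Hsup; [lra | exact Hbelow]. }
  assert (Hm : m = b).
  { destruct (Req_dec m b) as [| Hne]; [assumption |]. exfalso.
    destruct (Hstep m) as [d [Hd Hright]]; [lra | exact HAm |].
    set (x := Rmin b (m + d / 2)).
    assert (Hx : m < x) by (unfold x; apply Rmin_glb_lt; lra).
    assert (HEx : E x).
    { split; [unfold x; split; [apply Rmin_glb; lra | apply Rmin_l] |].
      intros r Hr. destruct (Rlt_or_le r m); [apply Hbelow; lra |].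
      apply Hright. split; [lra |]. assert (x <= m + d / 2) by apply Rmin_r. lra. }
    specialize (Hub x HEx). lra. }
  intros s Hs. destruct (Rlt_or_le s m); [apply Hbelow; lra |].
  replace s with m by lra. exact HAm.
Qed.

Lemma stays_above_of_deriv_nonneg_below (phi dphi : R -> R) (a c h : R) : 0 < h ->
  (forall t, a <= t -> derivable_pt_lim phi t (dphi t)) ->
  (forall t, a <= t -> phi t < c -> 0 <= dphi t) ->
  c <= phi a -> forall t, a <= t -> c - h < phi t.
Proof.
  intros Hh Hd Hpos Ha t Ht.
  assert (Hcont : forall s, a <= s -> continuity_pt phi s)
    by (intros s Hs; exact (dlim_continuity _ _ _ (Hd s Hs))).
  apply (continuous_induction (fun r => c - h < phi r) a t); try lra.
  - intros s Hs Hlt.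
    destruct (continuity_pt_ball phi s (Hcont s ltac:(lra)) (phi s - (c - h)))
      as [d [Hd0 Hball]]; [lra |].
    exists d. split; [exact Hd0 |]. intros r Hr.
    assert (Habs : Rabs (phi r - phi s) < phi s - (c - h))
      by (apply Hball; rewrite Rabs_right; lra).
    apply Rabs_def2 in Habs. lra.
  - intros s Hs Hprev.
    destruct (Rlt_or_le (c - h) (phi s)) as [| Hle]; [assumption |]. exfalso.
    destruct (continuity_pt_ball phi s (Hcont s ltac:(lra)) (c - phi s))
      as [d [Hd0 Hball]]; [lra |].
    (* on [r, s] the function stays below c, hence cannot decrease *)
    set (r := Rmax a (s - d / 2)).
    assert (Hr1 : a <= r) by apply Rmax_l.
    assert (Hr2 : r < s) by (unfold r; apply Rmax_lub_lt; lra).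
    assert (Hr3 : s - d / 2 <= r) by apply Rmax_r.
    destruct (MVT_cor2 phi dphi r s Hr2) as [xi [Heq Hxi]]; [intros; apply Hd; lra |].
    assert (Habs : Rabs (phi xi - phi s) < c - phi s) by (apply Hball; rewrite Rabs_left1; lra).
    apply Rabs_def2 in Habs.
    assert (0 <= dphi xi) by (apply Hpos; lra).
    assert (c - h < phi r) by (apply Hprev; lra).
    assert (0 <= dphi xi * (s - r)) by (apply Rmult_le_pos; lra).
    lra.
Qed.

Lemma reaches_level_of_drift (x U dphi : R -> R) (T0 c eps B : R) : 0 < eps ->
  (forall t, T0 <= t -> Rabs (U t) <= B) ->
  (forall t, T0 <= t -> derivable_pt_lim (fun s => x s - U s) t (dphi t)) ->
  (forall t, T0 <= t -> x t < c -> eps <= dphi t) ->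
  exists T1, T0 <= T1 /\ c <= x T1.
Proof.
  intros He HU Hd Hdrift. apply NNPP. intro Hnever.
  assert (Hbelow : forall t, T0 <= t -> x t < c).
  { intros t Ht. apply Rnot_le_lt. intro Hct. apply Hnever. now exists t. }
  set (phi := fun s => x s - U s).
  set (s := Rabs ((c + B - phi T0) / eps) + 1).
  assert (Hs : (c + B - phi T0) / eps < s) by (unfold s; pose proof (RRle_abs ((c + B - phi T0) / eps)); lra).
  assert (Hs0 : 0 < s) by (unfold s; pose proof (Rabs_pos ((c + B - phi T0) / eps)); lra).
  destruct (MVT_cor2 phi dphi T0 (T0 + s)) as [xi [Heq Hxi]]; [lra | intros; apply Hd; lra |].
  assert (eps <= dphi xi) by (apply Hdrift; [lra | apply Hbelow; lra]).
  assert (phi (T0 + s) < c + B).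
  { unfold phi. pose proof (proj1 (Rabs_le_between _ _) (HU (T0 + s) ltac:(lra))).
    pose proof (Hbelow (T0 + s) ltac:(lra)). lra. }
  assert (c + B - phi T0 < eps * s).
  { apply (Rmult_lt_compat_l eps) in Hs; [| exact He].
    replace (eps * ((c + B - phi T0) / eps)) with (c + B - phi T0) in Hs by (field; lra). exact Hs. }
  replace (T0 + s - T0) with s in Heq by ring.
  assert (eps * s <= dphi xi * s) by (apply Rmult_le_compat_r; lra).
  lra.
Qed.

Lemma eventually_above_of_drift (x U dphi : R -> R) (c eps B h : R) : 0 < eps -> 0 < h ->
  Rbar_locally p_infty (fun t => Rabs (U t) <= B /\
    derivable_pt_lim (fun s => x s - U s) t (dphi t) /\ (x t < c -> eps <= dphi t)) ->
  Rbar_locally p_infty (fun t => c - 2 * B - h < x t).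
Proof.
  intros He Hh [M HM].
  assert (HU : forall t, M + 1 <= t -> Rabs (U t) <= B) by (intros t Ht; apply HM; lra).
  assert (Hd : forall t, M + 1 <= t -> derivable_pt_lim (fun s => x s - U s) t (dphi t))
    by (intros t Ht; apply HM; lra).
  assert (Hdrift : forall t, M + 1 <= t -> x t < c -> eps <= dphi t) by (intros t Ht; apply HM; lra).
  destruct (reaches_level_of_drift x U dphi (M + 1) c eps B He HU Hd Hdrift) as [T1 [HT1 HxT1]].
  exists T1. intros t Ht.
  assert (Habove : c - B - h < x t - U t).
  { apply (stays_above_of_deriv_nonneg_below (fun s => x s - U s) dphi T1 (c - B) h Hh);
      [intros; apply Hd; lra | | | lra].
    - intros s Hs Hlow. pose proof (proj1 (Rabs_le_between _ _) (HU s ltac:(lra))).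
      apply Rle_trans with eps; [lra | apply Hdrift; lra].
    - pose proof (proj1 (Rabs_le_between _ _) (HU T1 HT1)). lra. }
  pose proof (proj1 (Rabs_le_between _ _) (HU t ltac:(lra))). lra.
Qed.

Lemma liminf_ge_of_eventually (u : R -> R) (eps : R) :
  Rbar_locally p_infty (fun t => eps <= u t) -> liminf_ge u eps.
Proof.
  intros [M HM] delta Hdelta. exists (M + 1). intros t Ht.
  specialize (HM t ltac:(lra)). lra.
Qed.

Lemma eventually_exp_le (u : R -> R) (a : R) :
  Rbar_locally p_infty (fun t => a < ln (u t)) ->
  Rbar_locally p_infty (fun t => 0 < u t) ->
  Rbar_locally p_infty (fun t => exp a <= u t).
Proof.
  intros Hln Hpos. generalize (filter_and _ _ Hln Hpos).
  apply filter_imp. intros t [Hlt Hu].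
  rewrite <- (exp_ln (u t)) by exact Hu. left. now apply exp_increasing.
Qed.

Lemma pos_of_deriv_ge_neg_mult (u du : R -> R) (a s C : R) : a < s ->
  (forall r, a <= r <= s -> derivable_pt_lim u r (du r)) -> 0 < u a ->
  (forall r, a < r < s -> - C * u r <= du r) -> 0 < u s.
Proof.
  intros Has Hd Hua Hlow.
  (* u e^{C r} is nondecreasing *)
  set (w := fun r => u r * exp (C * r)).
  destruct (MVT_cor2 w (fun r => du r * exp (C * r) + u r * (C * exp (C * r))) a s Has)
    as [xi [Heq Hxi]].
  { intros r Hr. eapply dlim_eq_val;
      [apply (dlim_mult u (fun r => exp (C * r))); [apply Hd; lra | apply dlim_exp_scal] | reflexivity]. }
  pose proof (Hlow xi Hxi). pose proof (exp_pos (C * xi)). pose proof (exp_pos (C * s)).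
  assert (0 <= (du xi * exp (C * xi) + u xi * (C * exp (C * xi))) * (s - a))
    by (apply Rmult_le_pos; [nra | lra]).
  assert (0 < w a) by (unfold w; apply Rmult_lt_0_compat; [exact Hua | apply exp_pos]).
  assert (0 < w s) by lra.
  unfold w in *. destruct (Rlt_or_le 0 (u s)); [assumption | nra].
Qed.

Lemma RInt_derivable_pt_lim (h : R -> R) (a : R) : 0 < a ->
  (forall x, 0 < x -> continuity_pt h x) ->
  forall x, 0 < x -> derivable_pt_lim (fun y => RInt h a y) x (h x).
Proof.
  intros Ha Hc x Hx. apply is_derive_Reals.
  apply (is_derive_RInt h (fun y => RInt h a y) a x).
  - assert (Hx2 : 0 < x / 2) by lra.
    exists (mkposreal _ Hx2). intros y Hy.
    apply (RInt_correct (V := R_CompleteNormedModule)).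
    apply (ex_RInt_continuous (V := R_CompleteNormedModule)).
    intros z Hz. apply continuity_pt_filterlim, Hc.
    change (Rabs (y - x) < x / 2) in Hy. apply Rabs_def2 in Hy.
    assert (0 < Rmin a y) by (apply Rmin_glb_lt; lra). lra.
  - apply continuity_pt_filterlim, Hc, Hx.
Qed.

Section ResponseFunction.
Variables (f : R -> R) (thr : R).
Hypothesis hf : response_fun f thr.

Lemma response_nonneg x : 0 <= x -> 0 <= f x.
Proof. destruct hf as [H _]; auto. Qed.

Lemma response_0 : f 0 = 0.
Proof. now destruct hf as [_ [H _]]. Qed.

Lemma response_deriv : exists f', (forall x, 0 <= x -> derivable_pt_lim f x (f' x)) /\
  (forall x, 0 <= x -> continuity_pt f' x) /\ (forall x, 0 <= x -> 0 < f' x).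
Proof. now destruct hf as [_ [_ [H _]]]. Qed.

Lemma response_continuity x : 0 <= x -> continuity_pt f x.
Proof. intros Hx. destruct response_deriv as [f' [Hd _]]. exact (dlim_continuity _ _ _ (Hd x Hx)). Qed.

Lemma response_lt x y : 0 <= x -> x < y -> f x < f y.
Proof.
  intros Hx Hxy. destruct response_deriv as [f' [Hd [_ Hpos]]].
  destruct (MVT_cor2 f f' x y Hxy) as [c [Heq Hc]]; [intros; apply Hd; lra |].
  assert (0 < f' c * (y - x)) by (apply Rmult_lt_0_compat; [apply Hpos | ]; lra). lra.
Qed.

Lemma response_le x y : 0 <= x -> x <= y -> f x <= f y.
Proof. intros Hx [Hxy | ->]; [left; now apply response_lt | lra]. Qed.

Lemma response_pos x : 0 < x -> 0 < f x.
Proof. intros Hx. rewrite <- response_0. apply response_lt; lra. Qed.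

Lemma response_bounded : exists F, 0 < F /\ forall x, 0 <= x -> f x <= F.
Proof.
  destruct hf as [_ [_ [_ [[B HB] _]]]].
  exists (Rabs B + 1). split; [pose proof (Rabs_pos B); lra |].
  intros x Hx. apply Rle_trans with (Rabs (f x)); [apply RRle_abs |].
  pose proof (RRle_abs B). specialize (HB x Hx). lra.
Qed.

(* Mean value theorem near 0 (where f' is bounded) and boundedness of f away from 0. *)
Lemma response_le_lin : exists K, 0 < K /\ forall x, 0 <= x -> f x <= K * x.
Proof.
  destruct response_deriv as [f' [Hd [Hc Hpos]]].
  destruct (continuity_ab_maj f' 0 1) as [xm [Hmax Hxm]]; [lra | intros; apply Hc; lra |].
  destruct response_bounded as [F [HF HFb]].
  exists (Rmax (f' xm) F). split; [apply Rlt_le_trans with F; [exact HF | apply Rmax_r] |].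
  intros x Hx. pose proof (Rmax_l (f' xm) F). pose proof (Rmax_r (f' xm) F).
  destruct (Rle_or_lt x 1).
  - destruct (Req_dec x 0) as [-> | Hne]; [rewrite response_0; lra |].
    destruct (MVT_cor2 f f' 0 x) as [c [Heq Hc']]; [lra | intros; apply Hd; lra |].
    rewrite response_0 in Heq.
    assert (f' c <= f' xm) by (apply Hmax; lra).
    assert (0 < f' c) by (apply Hpos; lra).
    nra.
  - specialize (HFb x Hx). nra.
Qed.

Lemma response_strongly_monotone M : 0 <= M -> exists m, 0 < m /\
  forall x y, 0 <= x <= M -> 0 <= y <= M -> m * (x - y) ^ 2 <= (x - y) * (f x - f y).
Proof.
  intros HM. destruct response_deriv as [f' [Hd [Hc Hpos]]].
  destruct (continuity_ab_min f' 0 M HM) as [xm [Hmin Hxm]]; [intros; apply Hc; lra |].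
  exists (f' xm). split; [apply Hpos; lra |].
  assert (Hlt : forall x y, 0 <= x <= M -> 0 <= y <= M -> x < y ->
    f' xm * (x - y) ^ 2 <= (x - y) * (f x - f y)).
  { intros x y Hx Hy Hxy.
    destruct (MVT_cor2 f f' x y Hxy) as [c [Heq Hc']]; [intros; apply Hd; lra |].
    assert (f' xm <= f' c) by (apply Hmin; lra).
    replace ((x - y) * (f x - f y)) with (f' c * (x - y) ^ 2) 
      by (transitivity ((x - y) * - (f y - f x)); [rewrite Heq; ring | ring]).
    apply Rmult_le_compat_r; [apply pow2_ge_0 | assumption]. }
  intros x y Hx Hy. destruct (Rtotal_order x y) as [Hxy | [-> | Hxy]].
  - now apply Hlt.
  - replace (y - y) with 0 by ring. lra.
  - replace ((x - y) ^ 2) with ((y - x) ^ 2) by ring.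
    replace ((x - y) * (f x - f y)) with ((y - x) * (f y - f x)) by ring.
    now apply Hlt.
Qed.

Definition inv_response_integral (lam x : R) : R := RInt (fun y => / f y) lam x.

Lemma inv_response_integral_deriv lam x : 0 < lam -> 0 < x ->
  derivable_pt_lim (inv_response_integral lam) x (/ f x).
Proof.
  intros Hlam Hx. apply (RInt_derivable_pt_lim (fun y => / f y) lam Hlam); [| exact Hx].
  intros y Hy. apply continuity_pt_inv; [apply response_continuity; lra |].
  apply Rgt_not_eq, response_pos, Hy.
Qed.

End ResponseFunction.

Section Chemostat.
Variables (D D1 D2 g1 g2 mu thr1 thr2 : R) (f1 f2 : R -> R).
Hypotheses (hD : 0 < D) (hD1 : 0 < D1) (hD2 : 0 < D2)
  (hg1 : 0 < g1) (hg2 : 0 < g2) (hmu : 0 < mu).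
(* Only f(0) = 0, monotonicity, boundedness and the derivative hypotheses are used. *)
Hypotheses (hf1 : response_fun f1 thr1) (hf2 : response_fun f2 thr2).

Definition fN (n p : R) : R := (mu - n) * D - p * f1 n.
Definition fP (n p z : R) : R := g1 * p * f1 n - D1 * p - z * f2 p.
Definition fZ (p z : R) : R := g2 * z * f2 p - D2 * z.

Definition pos_solution (N P Z : R -> R) : Prop :=
  is_solution mu D D1 D2 g1 g2 f1 f2 N P Z /\ 0 < N 0 /\ 0 < P 0 /\ 0 < Z 0.

Section Solution.
Variables (N P Z : R -> R).
Hypothesis hsol : is_solution mu D D1 D2 g1 g2 f1 f2 N P Z.

Lemma solution_dN t : 0 < t -> derivable_pt_lim N t (fN (N t) (P t)).
Proof. intros Ht. destruct hsol as [_ [_ [_ H]]]. apply (H t Ht). Qed.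

Lemma solution_dP t : 0 < t -> derivable_pt_lim P t (fP (N t) (P t) (Z t)).
Proof. intros Ht. destruct hsol as [_ [_ [_ H]]]. apply (H t Ht). Qed.

Lemma solution_dZ t : 0 < t -> derivable_pt_lim Z t (fZ (P t) (Z t)).
Proof. intros Ht. destruct hsol as [_ [_ [_ H]]]. apply (H t Ht). Qed.

(* P and Z are bounded on [t0, s], so the logarithmic derivatives of N, P, Z are
   bounded below there as long as all three stay positive. *)
Lemma solution_pos_at_sup t0 s : 0 < t0 < s ->
  0 < N t0 -> 0 < P t0 -> 0 < Z t0 ->
  (forall r, t0 <= r < s -> 0 < N r /\ 0 < P r /\ 0 < Z r) ->
  0 < N s /\ 0 < P s /\ 0 < Z s.
Proof.
  intros Hs HN0 HP0 HZ0 Hprev.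
  destruct (response_le_lin f1 thr1 hf1) as [K1 [HK1 HK1b]].
  destruct (response_le_lin f2 thr2 hf2) as [K2 [HK2 HK2b]].
  destruct (continuity_bounded_on P t0 s) as [MP HMP];
    [intros c Hc; exact (dlim_continuity _ _ _ (solution_dP c ltac:(lra))) |].
  destruct (continuity_bounded_on Z t0 s) as [MZ HMZ];
    [intros c Hc; exact (dlim_continuity _ _ _ (solution_dZ c ltac:(lra))) |].
  assert (HPb : forall r, t0 <= r <= s -> P r <= MP)
    by (intros r Hr; pose proof (RRle_abs (P r)); pose proof (HMP r Hr); lra).
  assert (HZb : forall r, t0 <= r <= s -> Z r <= MZ)
    by (intros r Hr; pose proof (RRle_abs (Z r)); pose proof (HMZ r Hr); lra).
  repeat split.
  - apply (pos_of_deriv_ge_neg_mult N (fun r => fN (N r) (P r)) t0 s (D + K1 * MP));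
      [lra | intros; apply solution_dN; lra | exact HN0 |].
    intros r Hr. destruct (Hprev r ltac:(lra)) as [HNr [HPr _]].
    specialize (HPb r ltac:(lra)). specialize (HK1b (N r) ltac:(lra)).
    pose proof (response_nonneg f1 thr1 hf1 (N r) ltac:(lra)).
    unfold fN. nra.
  - apply (pos_of_deriv_ge_neg_mult P (fun r => fP (N r) (P r) (Z r)) t0 s (D1 + K2 * MZ));
      [lra | intros; apply solution_dP; lra | exact HP0 |].
    intros r Hr. destruct (Hprev r ltac:(lra)) as [HNr [HPr HZr]].
    specialize (HZb r ltac:(lra)). specialize (HK2b (P r) ltac:(lra)).
    pose proof (response_nonneg f1 thr1 hf1 (N r) ltac:(lra)).
    pose proof (response_nonneg f2 thr2 hf2 (P r) ltac:(lra)).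
    assert (Z r * f2 (P r) <= MZ * (K2 * P r)) by (apply Rmult_le_compat; lra).
    assert (0 <= g1 * P r * f1 (N r)) by (apply Rmult_le_pos; nra).
    unfold fP. nra.
  - apply (pos_of_deriv_ge_neg_mult Z (fun r => fZ (P r) (Z r)) t0 s D2);
      [lra | intros; apply solution_dZ; lra | exact HZ0 |].
    intros r Hr. destruct (Hprev r ltac:(lra)) as [_ [HPr HZr]].
    pose proof (response_nonneg f2 thr2 hf2 (P r) ltac:(lra)).
    assert (0 <= g2 * Z r * f2 (P r)) by (apply Rmult_le_pos; nra).
    unfold fZ. nra.
Qed.

Lemma solution_pos_after t0 : 0 < t0 -> 0 < N t0 -> 0 < P t0 -> 0 < Z t0 ->
  forall t, t0 <= t -> 0 < N t /\ 0 < P t /\ 0 < Z t.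
Proof.
  intros Ht0 HN0 HP0 HZ0 t Ht.
  apply (continuous_induction (fun r => 0 < N r /\ 0 < P r /\ 0 < Z r) t0 t); auto; try lra.
  - intros s Hs [HNs [HPs HZs]].
    destruct (continuity_pt_pos_ball N s (dlim_continuity _ _ _ (solution_dN s ltac:(lra))) HNs)
      as [e1 [He1 HN']].
    destruct (continuity_pt_pos_ball P s (dlim_continuity _ _ _ (solution_dP s ltac:(lra))) HPs)
      as [e2 [He2 HP']].
    destruct (continuity_pt_pos_ball Z s (dlim_continuity _ _ _ (solution_dZ s ltac:(lra))) HZs)
      as [e3 [He3 HZ']].
    exists (Rmin e1 (Rmin e2 e3)). split; [repeat apply Rmin_glb_lt; auto |].
    intros r Hr. pose proof (Rmin_l e1 (Rmin e2 e3)). pose proof (Rmin_r e1 (Rmin e2 e3)).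
    pose proof (Rmin_l e2 e3). pose proof (Rmin_r e2 e3).
    repeat split; [apply HN' | apply HP' | apply HZ']; rewrite Rabs_right; lra.
  - intros s Hs Hprev. apply (solution_pos_at_sup t0 s); auto; lra.
Qed.

Lemma solution_total_deriv t : 0 < t ->
  derivable_pt_lim (fun s => N s + P s / g1 + Z s / (g1 * g2)) t
    (mu * D - D * N t - D1 * P t / g1 - D2 * Z t / (g1 * g2)).
Proof.
  intros Ht. eapply dlim_eq_val.
  - apply dlim_plus; [apply dlim_plus; [apply solution_dN, Ht |] |].
    + apply (derivable_pt_lim_div_scal P), solution_dP, Ht.
    + apply (derivable_pt_lim_div_scal Z), solution_dZ, Ht.
  - unfold fN, fP, fZ. field. lra.
Qed.

End Solution.

Lemma solution_eventually_pos N P Z : pos_solution N P Z ->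
  Rbar_locally p_infty (fun t => 0 < t /\ 0 < N t /\ 0 < P t /\ 0 < Z t).
Proof.
  intros [Hs [HN [HP HZ]]].
  pose proof Hs as [cN [cP [cZ _]]].
  destruct (cN (N 0) HN) as [dn [Hdn HNball]].
  destruct (cP (P 0) HP) as [dp [Hdp HPball]].
  destruct (cZ (Z 0) HZ) as [dz [Hdz HZball]].
  set (m := Rmin dn (Rmin dp dz)).
  assert (Hm : 0 < m) by (repeat apply Rmin_glb_lt; auto).
  assert (Hmn : m <= dn) by apply Rmin_l.
  assert (Hmp : m <= dp) by (pose proof (Rmin_r dn (Rmin dp dz)); pose proof (Rmin_l dp dz); unfold m; lra).
  assert (Hmz : m <= dz) by (pose proof (Rmin_r dn (Rmin dp dz)); pose proof (Rmin_r dp dz); unfold m; lra).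
  specialize (HNball (m / 2) ltac:(lra)). specialize (HPball (m / 2) ltac:(lra)).
  specialize (HZball (m / 2) ltac:(lra)).
  apply Rabs_def2 in HNball, HPball, HZball.
  exists (m / 2). intros t Ht. split; [lra |].
  apply (solution_pos_after N P Z Hs (m / 2)); lra.
Qed.

Definition box (Sm n p z : R) : Prop :=
  0 < n <= Sm /\ 0 < p <= g1 * Sm /\ 0 < z <= g1 * g2 * Sm.

Lemma box_of_total Sm n p z : 0 < n -> 0 < p -> 0 < z ->
  n + p / g1 + z / (g1 * g2) <= Sm -> box Sm n p z.
Proof.
  intros Hn Hp Hz Htot. assert (Hg12 : 0 < g1 * g2) by nra.
  assert (0 < p / g1) by (apply Rdiv_lt_0_compat; lra).
  assert (0 < z / (g1 * g2)) by (apply Rdiv_lt_0_compat; lra).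
  assert (EP : p = g1 * (p / g1)) by (field; lra).
  assert (EZ : z = g1 * g2 * (z / (g1 * g2))) by (field; lra).
  repeat split; try lra.
  - rewrite EP. apply Rmult_le_compat_l; lra.
  - rewrite EZ. apply Rmult_le_compat_l; lra.
Qed.

(* The weighted total N + P/g1 + Z/(g1 g2) decays at rate min(D, D1, D2) towards
   a level of order mu D. *)
Lemma solution_eventually_in_box : exists Sm, 0 < Sm /\ forall N P Z, pos_solution N P Z ->
  Rbar_locally p_infty (fun t => 0 < t /\ box Sm (N t) (P t) (Z t)).
Proof.
  set (mS := Rmin D (Rmin D1 D2)).
  assert (HmS : 0 < mS) by (unfold mS; repeat apply Rmin_glb_lt; auto).
  assert (HmSD : mS <= D) by apply Rmin_l.
  assert (HmSD1 : mS <= D1)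
    by (unfold mS; pose proof (Rmin_r D (Rmin D1 D2)); pose proof (Rmin_l D1 D2); lra).
  assert (HmSD2 : mS <= D2)
    by (unfold mS; pose proof (Rmin_r D (Rmin D1 D2)); pose proof (Rmin_r D1 D2); lra).
  set (Sm0 := 2 * mu * D / mS).
  assert (HSm0 : mS * Sm0 = 2 * mu * D) by (unfold Sm0; field; lra).
  assert (Hg12 : 0 < g1 * g2) by nra.
  exists (Sm0 + 1). split; [assert (0 < Sm0) by (unfold Sm0; apply Rdiv_lt_0_compat; nra); lra |].
  intros N P Z Hsol. pose proof (solution_eventually_pos N P Z Hsol) as Hpos.
  set (total := fun s => N s + P s / g1 + Z s / (g1 * g2)).
  assert (Htotal : Rbar_locally p_infty (fun t => - Sm0 - 2 * 0 - 1 < -1 * total t)).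
  { apply (eventually_above_of_drift (fun t => -1 * total t) (fun _ => 0)
      (fun t => -1 * (mu * D - D * N t - D1 * P t / g1 - D2 * Z t / (g1 * g2)) - 0)
      (- Sm0) (mu * D) 0 1); [nra | lra |].
    revert Hpos. apply filter_imp. intros t [Ht [HN [HP HZ]]]. repeat split.
    - rewrite Rabs_R0. lra.
    - apply dlim_minus; [apply dlim_scal, (solution_total_deriv N P Z (proj1 Hsol) t Ht) | apply dlim_const].
    - intros Hlarge. unfold total in Hlarge.
      assert (mS * (P t / g1) <= D1 * P t / g1).
      { unfold Rdiv. rewrite <- Rmult_assoc. apply Rmult_le_compat_r; [left; apply Rinv_0_lt_compat |]; nra. }
      assert (mS * (Z t / (g1 * g2)) <= D2 * Z t / (g1 * g2)).
      { unfold Rdiv. rewrite <- Rmult_assoc. apply Rmult_le_compat_r; [left; apply Rinv_0_lt_compat |]; nra. }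
      assert (mS * Sm0 < mS * (N t + P t / g1 + Z t / (g1 * g2))) by (apply Rmult_lt_compat_l; lra).
      nra. }
  generalize (filter_and _ _ Htotal Hpos). apply filter_imp.
  intros t [Hlt [Ht [HN [HP HZ]]]]. split; [exact Ht |].
  apply box_of_total; try assumption. unfold total in Hlt. lra.
Qed.

(* Below the level c, the consumption term P f1(N) is at most a quarter of the inflow. *)
Lemma N_persistence : exists n0, 0 < n0 /\ forall N P Z, pos_solution N P Z ->
  Rbar_locally p_infty (fun t => n0 <= N t).
Proof.
  destruct solution_eventually_in_box as [Sm [HSm Hbox]].
  destruct (response_le_lin f1 thr1 hf1) as [K1 [HK1 HK1b]].
  set (Pm := g1 * Sm).
  assert (HPm : 0 < Pm) by (unfold Pm; nra).
  set (c := Rmin (mu / 2) (mu * D / (4 * Pm) / K1)).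
  assert (Hc0 : 0 < c)
    by (unfold c; apply Rmin_glb_lt; [lra | apply Rdiv_lt_0_compat; [apply Rdiv_lt_0_compat |]; nra]).
  assert (Hc1 : c <= mu / 2) by apply Rmin_l.
  assert (Hfc : f1 c <= mu * D / (4 * Pm)).
  { apply Rle_trans with (K1 * c); [apply HK1b; lra |].
    apply Rmult_le_of_le_div; [exact HK1 | apply Rmin_r]. }
  exists (c / 2). split; [lra |].
  intros N P Z Hsol.
  generalize (eventually_above_of_drift N (fun _ => 0) (fun t => fN (N t) (P t) - 0)
    c (mu * D / 4) 0 (c / 2) ltac:(nra) ltac:(lra)).
  intros Hdrift. eapply filter_imp; [| apply Hdrift]; [intros t Ht; lra |].
  generalize (Hbox N P Z Hsol). apply filter_imp.
  intros t [Ht [[HN HN'] [[HP HP'] _]]]. repeat split.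
  - rewrite Rabs_R0. lra.
  - apply dlim_minus; [apply (solution_dN N P Z (proj1 Hsol) t Ht) | apply dlim_const].
  - intros Hlow.
    assert (f1 (N t) <= f1 c) by (apply (response_le f1 thr1 hf1); lra).
    pose proof (response_nonneg f1 thr1 hf1 (N t) ltac:(lra)).
    assert (Hcons : P t * f1 (N t) <= Pm * (mu * D / (4 * Pm))) by (apply Rmult_le_compat; try lra; exact HP').
    replace (Pm * (mu * D / (4 * Pm))) with (mu * D / 4) in Hcons by (field; lra).
    unfold fN. nra.
Qed.


Variable lamP : R.
Hypotheses (hlamP0 : 0 <= lamP) (hlamP : f1 lamP = D1 / g1) (hlamP_mu : lamP < mu).

Lemma lnP_rate_eq n p z b k : 0 < p ->
  fP n p z / p - (b * fZ p z + k * (2 * (n - mu) * fN n p)) =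
  (g1 * f1 n - D1 + 2 * k * D * (n - mu) ^ 2) + 2 * k * ((n - mu) * (p * f1 n))
  + z * (b * D2 - f2 p / p - b * g2 * f2 p).
Proof. intros Hp. unfold fP, fZ, fN. field. lra. Qed.

(* Either N is close to mu, where g1 f1(N) > D1 because lamP < mu, or (N - mu)^2 is large. *)
Lemma prey_growth_or_far : exists e k, 0 < e /\ 0 < k /\
  forall n, 0 <= n -> 3 * e <= g1 * f1 n - D1 + 2 * k * D * (n - mu) ^ 2.
Proof.
  set (mu' := (lamP + mu) / 2).
  set (e := (g1 * f1 mu' - D1) / 3).
  assert (He : 0 < e).
  { assert (Hlt : f1 lamP < f1 mu') by (apply (response_lt f1 thr1 hf1); unfold mu'; lra).
    rewrite hlamP in Hlt. apply (Rmult_lt_compat_l g1) in Hlt; [| lra].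
    replace (g1 * (D1 / g1)) with D1 in Hlt by (field; lra). unfold e. lra. }
  set (r := (mu - lamP) / 2).
  assert (Hr : 0 < r) by (unfold r; lra).
  set (k := (D1 + 3 * e) / (2 * D * r ^ 2)).
  assert (Hk : 0 < k) by (unfold k; apply Rdiv_lt_0_compat; [lra | apply Rmult_lt_0_compat; [lra | apply pow_lt; lra]]).
  assert (Hkr : 2 * k * D * r ^ 2 = D1 + 3 * e) by (unfold k; field; split; lra).
  exists e, k. split; [exact He | split; [exact Hk |]].
  intros n Hn. destruct (Rle_or_lt mu' n).
  - assert (f1 mu' <= f1 n) by (apply (response_le f1 thr1 hf1); [unfold mu' |]; lra).
    assert (0 <= 2 * k * D * (n - mu) ^ 2) by (apply Rmult_le_pos; [nra | apply pow2_ge_0]).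
    unfold e. nra.
  - pose proof (response_nonneg f1 thr1 hf1 n Hn).
    assert (r ^ 2 <= (n - mu) ^ 2) by (unfold r, mu' in *; simpl; nra).
    assert (2 * k * D * r ^ 2 <= 2 * k * D * (n - mu) ^ 2) by (apply Rmult_le_compat_l; nra).
    nra.
Qed.

(* For small P the b Z term absorbs the predation loss and the cross term
   2 k (N - mu) P f1(N) is negligible. *)
Lemma lnP_drift Sm : 0 < Sm -> exists e delta b k B, 0 < e /\ 0 < delta /\
  forall n p z, box Sm n p z ->
    Rabs (b * z + k * (n - mu) ^ 2) <= B /\
    (p < delta -> e <= fP n p z / p - (b * fZ p z + k * (2 * (n - mu) * fN n p))).
Proof.
  intros HSm.
  destruct (response_bounded f1 thr1 hf1) as [F1 [HF1 HF1b]].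
  destruct (response_le_lin f2 thr2 hf2) as [K2 [HK2 HK2b]].
  destruct prey_growth_or_far as [e [k [He [Hk Hgrowth]]]].
  set (Nb := Sm + mu).
  assert (HNb : 0 < Nb) by (unfold Nb; lra).
  set (b := 2 * K2 / D2).
  assert (Hb : 0 < b) by (unfold b; apply Rdiv_lt_0_compat; lra).
  assert (HbD2 : b * D2 = 2 * K2) by (unfold b; field; lra).
  assert (Hcross0 : 0 < 2 * k * Nb * F1)
    by (apply Rmult_lt_0_compat; [apply Rmult_lt_0_compat; [apply Rmult_lt_0_compat |] |]; lra).
  assert (Hpred0 : 0 < 2 * g2 * K2) by (apply Rmult_lt_0_compat; [apply Rmult_lt_0_compat |]; lra).
  set (delta := Rmin (e / (2 * k * Nb * F1)) (D2 / (2 * g2 * K2))).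
  assert (Hdelta : 0 < delta) by (unfold delta; apply Rmin_glb_lt; apply Rdiv_lt_0_compat; lra).
  assert (Hdelta1 : 2 * k * Nb * F1 * delta <= e)
    by (apply Rmult_le_of_le_div; [exact Hcross0 | apply Rmin_l]).
  assert (Hdelta2 : 2 * g2 * K2 * delta <= D2)
    by (apply Rmult_le_of_le_div; [exact Hpred0 | apply Rmin_r]).
  exists e, delta, b, k, (b * (g1 * g2 * Sm) + k * Nb ^ 2).
  split; [exact He | split; [exact Hdelta |]].
  intros n p z [[Hn Hn'] [[Hp Hp'] [Hz Hz']]].
  assert (HnNb : - Nb <= n - mu <= Nb) by (unfold Nb; lra).
  assert (Hsq : 0 <= (n - mu) ^ 2 <= Nb ^ 2) by (split; [apply pow2_ge_0 | simpl; nra]).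
  split.
  { rewrite Rabs_right by nra.
    assert (b * z <= b * (g1 * g2 * Sm)) by (apply Rmult_le_compat_l; lra).
    assert (k * (n - mu) ^ 2 <= k * Nb ^ 2) by (apply Rmult_le_compat_l; lra). lra. }
  intros Hsmall. rewrite lnP_rate_eq by exact Hp.
  pose proof (Hgrowth n ltac:(lra)).
  pose proof (response_nonneg f1 thr1 hf1 n ltac:(lra)).
  pose proof (HF1b n ltac:(lra)).
  pose proof (response_nonneg f2 thr2 hf2 p ltac:(lra)).
  pose proof (HK2b p ltac:(lra)).
  assert (Hcross : - e <= 2 * k * ((n - mu) * (p * f1 n))).
  { assert (0 <= p * f1 n <= delta * F1) by (split; [nra | apply Rmult_le_compat; lra]).
    assert (- (Nb * (delta * F1)) <= (n - mu) * (p * f1 n)) by nra.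
    nra. }
  assert (Hpred : 0 <= z * (b * D2 - f2 p / p - b * g2 * f2 p)).
  { apply Rmult_le_pos; [lra |].
    assert (f2 p / p <= K2) by (apply (Rmult_le_reg_r p); [lra | unfold Rdiv; rewrite Rmult_assoc, Rinv_l; lra]).
    assert (b * (g2 * f2 p) <= b * (D2 / 2)) by (apply Rmult_le_compat_l; nra).
    lra. }
  lra.
Qed.

Lemma P_persistence : exists p0, 0 < p0 /\ forall N P Z, pos_solution N P Z ->
  Rbar_locally p_infty (fun t => p0 <= P t).
Proof.
  destruct solution_eventually_in_box as [Sm [HSm Hbox]].
  destruct (lnP_drift Sm HSm) as [e [delta [b [k [B [He [Hdelta Hdrift]]]]]]].
  exists (exp (ln delta - 2 * B - 1)). split; [apply exp_pos |].
  intros N P Z Hsol. pose proof (proj1 Hsol) as Hs.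
  apply eventually_exp_le.
  - apply (eventually_above_of_drift (fun t => ln (P t)) (fun t => b * Z t + k * (N t - mu) ^ 2)
      (fun t => fP (N t) (P t) (Z t) / P t
                - (b * fZ (P t) (Z t) + k * (2 * (N t - mu) * fN (N t) (P t))))
      (ln delta) e B 1 He ltac:(lra)).
    generalize (Hbox N P Z Hsol). apply filter_imp.
    intros t [Ht Hin]. destruct (Hdrift _ _ _ Hin) as [HU Hlow].
    destruct Hin as [_ [[HP _] _]].
    repeat split; [exact HU | |].
    + eapply dlim_eq_val.
      * apply dlim_minus; [apply dlim_ln; [exact HP | apply (solution_dP N P Z Hs t Ht)] |].
        apply dlim_plus; [apply dlim_scal, (solution_dZ N P Z Hs t Ht) |].
        apply dlim_scal, (dlim_sqr (fun s => N s - mu)).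
        apply dlim_minus; [apply (solution_dN N P Z Hs t Ht) | apply dlim_const].
      * ring.
    + intros Hlt. apply Hlow. apply ln_lt_inv; [exact HP | exact Hdelta | exact Hlt].
  - generalize (Hbox N P Z Hsol). apply filter_imp. intros t [_ [_ [[HP _] _]]]. exact HP.
Qed.


Variable lamZ : R.
Hypotheses (hlamZ0 : 0 <= lamZ) (hlamZ : f2 lamZ = D2 / g2)
  (hmuc : mu > mu_c1 D g1 D1 lamP lamZ).

(* (lamP, P1) is the equilibrium of the predator-free N-P subsystem, and Q1 the
   corresponding value of N + P/g1. *)
Definition P1 : R := D * (mu - lamP) / f1 lamP.
Definition Q1 : R := lamP + P1 / g1.

Definition lyapV (n p : R) : R :=
  g1 * n - D1 * inv_response_integral f1 lamP n + p - P1 * ln p.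

Definition lyapV_rate (n p z : R) : R :=
  (g1 - D1 / f1 n) * fN n p + (1 - P1 / p) * fP n p z.

Definition lyap (k k2 n p : R) : R := k * lyapV n p + k2 * (n + p / g1 - Q1) ^ 2.

Definition lyap_rate (k k2 n p z : R) : R :=
  k * lyapV_rate n p z + k2 * (2 * (n + p / g1 - Q1) * (fN n p + fP n p z / g1)).

Lemma lamP_pos : 0 < lamP.
Proof.
  destruct hlamP0 as [Hpos | <-]; [exact Hpos |].
  rewrite (response_0 f1 thr1 hf1) in hlamP.
  assert (0 < D1 / g1) by (apply Rdiv_lt_0_compat; lra). lra.
Qed.

Lemma P1_f1_lamP : P1 * (D1 / g1) = D * (mu - lamP).
Proof. unfold P1. rewrite hlamP. field. lra. Qed.

Lemma P1_gt_lamZ : lamZ < P1.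
Proof.
  unfold mu_c1 in hmuc. unfold P1. rewrite hlamP.
  replace (D * (mu - lamP) / (D1 / g1)) with (D * g1 / D1 * (mu - lamP)) by (field; lra).
  apply (Rmult_lt_reg_l (D1 / (D * g1))); [apply Rdiv_lt_0_compat; nra |].
  replace (D1 / (D * g1) * (D * g1 / D1 * (mu - lamP))) with (mu - lamP) by (field; lra).
  replace (D1 / (D * g1) * lamZ) with (D1 * lamZ / (D * g1)) by (field; lra).
  lra.
Qed.

Lemma lyapV_rate_eq n p z : 0 < p -> 0 < f1 n ->
  lyapV_rate n p z =
  - ((g1 * f1 n - D1) * (P1 - (mu - n) * D / f1 n)) - z * f2 p + P1 * (z * f2 p / p).
Proof. intros Hp Hfn. unfold lyapV_rate, fN, fP. field. lra. Qed.

(* The right-hand side is minus the Z-free part of lyapV_rate (see lyapV_rate_eq). *)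
Lemma consumption_gap_ge M : 0 < M -> exists kap, 0 < kap /\ forall n, 0 < n <= M ->
  kap * (n - lamP) ^ 2 <= (g1 * f1 n - D1) * (P1 - (mu - n) * D / f1 n).
Proof.
  intros HM.
  destruct (response_bounded f1 thr1 hf1) as [F1 [HF1 HF1b]].
  destruct (response_strongly_monotone f1 thr1 hf1 (Rmax M lamP)) as [m [Hm Hmono]];
    [pose proof (Rmax_l M lamP); lra |].
  pose proof lamP_pos as Hlam.
  assert (Hfl : 0 < D1 / g1) by (apply Rdiv_lt_0_compat; lra).
  assert (Hg1Dm : 0 < g1 * D * m) by (apply Rmult_lt_0_compat; [apply Rmult_lt_0_compat |]; lra).
  exists (g1 * D * m / F1). split; [apply Rdiv_lt_0_compat; lra |].
  intros n Hn.
  set (fl := D1 / g1). set (fn := f1 n).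
  assert (Hfl0 : 0 < fl) by exact Hfl.
  assert (Hfn : 0 < fn) by (apply (response_pos f1 thr1 hf1); lra).
  assert (HfnF : fn <= F1) by (apply HF1b; lra).
  assert (Hmn : m * (n - lamP) ^ 2 <= (n - lamP) * (fn - fl)).
  { unfold fn, fl. rewrite <- hlamP. apply Hmono; split; try lra.
    - pose proof (Rmax_l M lamP); lra.
    - apply Rmax_r. }
  assert (Hsplit : (g1 * fn - D1) * (P1 - (mu - n) * D / fn) =
    g1 * D * (mu - lamP) * (fn - fl) ^ 2 / (fl * fn) + g1 * D * ((n - lamP) * (fn - fl)) / fn).
  { replace D1 with (g1 * fl) by (unfold fl; field; lra).
    replace P1 with (D * (mu - lamP) / fl) by (unfold P1, fl; rewrite hlamP; reflexivity).
    field. split; lra. }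
  rewrite Hsplit.
  assert (0 <= g1 * D * (mu - lamP) * (fn - fl) ^ 2 / (fl * fn)).
  { apply Rmult_le_pos; [| left; apply Rinv_0_lt_compat; nra].
    apply Rmult_le_pos; [nra | apply pow2_ge_0]. }
  assert (g1 * D * m / F1 * (n - lamP) ^ 2 <= g1 * D * (m * (n - lamP) ^ 2) / fn).
  { replace (g1 * D * m / F1 * (n - lamP) ^ 2) with (g1 * D * (m * (n - lamP) ^ 2) / F1)
      by (field; lra).
    unfold Rdiv. apply Rmult_le_compat_l; [pose proof (pow2_ge_0 (n - lamP)); nra |].
    apply Rinv_le_contravar; lra. }
  assert (g1 * D * (m * (n - lamP) ^ 2) / fn <= g1 * D * ((n - lamP) * (fn - fl)) / fn).
  { unfold Rdiv. apply Rmult_le_compat_r; [left; apply Rinv_0_lt_compat; lra |].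
    apply Rmult_le_compat_l; nra. }
  lra.
Qed.

Lemma Q_rate_eq n p z :
  fN n p + fP n p z / g1 = - D1 * (n + p / g1 - Q1) + (D1 - D) * (n - lamP) - z * f2 p / g1.
Proof.
  pose proof P1_f1_lamP as HP1. unfold fN, fP, Q1.
  match goal with |- ?L = ?R =>
    assert (L - R = D * (mu - lamP) - P1 * (D1 / g1)) by (field; lra) end.
  lra.
Qed.

(* Since P - P1 = g1 ((Q - Q1) - (N - lamP)), the prey-predator pair is bounded
   away from the equilibrium when P is. *)
Lemma far_from_equilibrium n p s : 0 < s -> p <= P1 - s ->
  s ^ 2 / (2 * g1 ^ 2) <= (n - lamP) ^ 2 + (n + p / g1 - Q1) ^ 2.
Proof.
  intros Hs Hp. set (X := n - lamP). set (Y := n + p / g1 - Q1).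
  assert (HYX : g1 * (Y - X) <= - s) by (unfold X, Y, Q1; field_simplify; lra).
  assert (Hgap : s / g1 <= X - Y).
  { apply (Rmult_le_reg_l g1); [exact hg1 |].
    replace (g1 * (s / g1)) with s by (field; lra). lra. }
  assert (Hs' : 0 < s / g1) by (apply Rdiv_lt_0_compat; lra).
  replace (s ^ 2 / (2 * g1 ^ 2)) with ((s / g1) ^ 2 / 2) by (field; lra).
  assert ((s / g1) ^ 2 <= (X - Y) ^ 2) by nra.
  assert (0 <= (X + Y) ^ 2) by apply pow2_ge_0.
  nra.
Qed.

Lemma lyapunov_rate_le n p z kap k k2 K2 F2 QB :
  0 < p -> 0 < z -> 0 < f1 n -> 0 < k -> 0 < k2 ->
  kap * (n - lamP) ^ 2 <= (g1 * f1 n - D1) * (P1 - (mu - n) * D / f1 n) ->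
  k * kap = k2 * ((D1 - D) ^ 2 / D1 + D1) ->
  0 <= f2 p <= K2 * p -> f2 p <= F2 -> Rabs (n + p / g1 - Q1) <= QB ->
  lyap_rate k k2 n p z <= - k2 * D1 * ((n - lamP) ^ 2 + (n + p / g1 - Q1) ^ 2)
                          + (k * P1 * K2 + 2 * k2 * QB * F2 / g1) * z.
Proof.
  intros Hp Hz Hfn Hk Hk2 Hgap Hkk [Hfp0 HfpK] HfpF HQB.
  unfold lyap_rate. rewrite lyapV_rate_eq, Q_rate_eq by assumption.
  set (X := n - lamP) in *. set (Y := n + p / g1 - Q1) in *. set (fp := f2 p) in *.
  set (W := (g1 * f1 n - D1) * (P1 - (mu - n) * D / f1 n)) in *.
  pose proof P1_gt_lamZ as HP1.
  assert (HV : - W - z * fp + P1 * (z * fp / p) <= - kap * X ^ 2 + P1 * K2 * z).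
  { assert (fp / p <= K2) by (apply (Rmult_le_reg_r p); [lra | unfold Rdiv; rewrite Rmult_assoc, Rinv_l; lra]).
    replace (z * fp / p) with (z * (fp / p)) by (field; lra).
    assert (z * (fp / p) <= z * K2) by (apply Rmult_le_compat_l; lra).
    assert (0 <= z * fp) by nra.
    nra. }
  (* Young's inequality for the cross term 2 (D1 - D) X Y *)
  assert (HQ : 2 * Y * (- D1 * Y + (D1 - D) * X - z * fp / g1)
               <= - D1 * Y ^ 2 + (D1 - D) ^ 2 / D1 * X ^ 2 + 2 * QB * F2 / g1 * z).
  { assert (Hyoung : 0 <= (D1 * Y - (D1 - D) * X) ^ 2 / D1)
      by (apply Rmult_le_pos; [apply pow2_ge_0 | left; apply Rinv_0_lt_compat; lra]).
    replace ((D1 * Y - (D1 - D) * X) ^ 2 / D1)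
      with (D1 * Y ^ 2 + (D1 - D) ^ 2 / D1 * X ^ 2 - 2 * (D1 - D) * X * Y) in Hyoung by (field; lra).
    pose proof (proj1 (Rabs_le_between _ _) HQB) as HY.
    assert (- (QB * (z * F2)) <= Y * (z * fp)).
    { assert (z * fp <= z * F2) by (apply Rmult_le_compat_l; lra).
      assert (0 <= z * fp) by nra. nra. }
    replace (2 * Y * (- D1 * Y + (D1 - D) * X - z * fp / g1))
      with (- 2 * D1 * Y ^ 2 + 2 * (D1 - D) * X * Y - 2 * (Y * (z * fp)) / g1) by (field; lra).
    replace (2 * QB * F2 / g1 * z) with (- 2 * (- (QB * (z * F2))) / g1) by (field; lra).
    assert (- 2 * (Y * (z * fp)) / g1 <= - 2 * (- (QB * (z * F2))) / g1).
    { unfold Rdiv. apply Rmult_le_compat_r; [left; apply Rinv_0_lt_compat; lra | lra]. }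
    lra. }
  apply (Rmult_le_compat_l k) in HV; [| lra].
  apply (Rmult_le_compat_l k2) in HQ; [| lra].
  replace (k * (- kap * X ^ 2 + P1 * K2 * z)) with (- (k * kap) * X ^ 2 + k * P1 * K2 * z) in HV by ring.
  rewrite Hkk in HV.
  match goal with |- ?L <= ?R =>
    replace R with (- (k2 * ((D1 - D) ^ 2 / D1 + D1)) * X ^ 2 + k * P1 * K2 * z
      + k2 * (- D1 * Y ^ 2 + (D1 - D) ^ 2 / D1 * X ^ 2 + 2 * QB * F2 / g1 * z)) by (field; lra) end.
  lra.
Qed.

Lemma Q1_pos : 0 < Q1.
Proof.
  pose proof lamP_pos. pose proof P1_gt_lamZ.
  assert (0 < P1 / g1) by (apply Rdiv_lt_0_compat; lra). unfold Q1. lra.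
Qed.

Lemma box_Q_bound Sm n p z : box Sm n p z -> Rabs (n + p / g1 - Q1) <= 2 * Sm + Q1.
Proof.
  intros [[Hn Hn'] [[Hp Hp'] _]]. pose proof Q1_pos.
  assert (0 < p / g1) by (apply Rdiv_lt_0_compat; lra).
  assert (p / g1 <= Sm).
  { apply (Rmult_le_reg_l g1); [exact hg1 |].
    replace (g1 * (p / g1)) with p by (field; lra). exact Hp'. }
  apply Rabs_le. lra.
Qed.

(* Either P is above lamZ + sig, where the predator grows, or P is at least sig
   below P1, hence away from the equilibrium of the predator-free subsystem. *)
Lemma predator_growth_or_far n p sig k2 : 0 < sig -> 2 * sig = P1 - lamZ -> 0 < k2 -> 0 <= p ->
  g2 * f2 (lamZ + sig) <= k2 * D1 * (sig ^ 2 / (2 * g1 ^ 2)) ->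
  g2 * f2 (lamZ + sig) - D2
  <= g2 * f2 p - D2 + k2 * D1 * ((n - lamP) ^ 2 + (n + p / g1 - Q1) ^ 2).
Proof.
  intros Hsig Hsig2 Hk2 Hp Hk2sig.
  set (R2 := (n - lamP) ^ 2 + (n + p / g1 - Q1) ^ 2).
  assert (HR2 : 0 <= R2)
    by (unfold R2; pose proof (pow2_ge_0 (n - lamP)); pose proof (pow2_ge_0 (n + p / g1 - Q1)); lra).
  assert (0 <= k2 * D1 * R2) by (apply Rmult_le_pos; [apply Rmult_le_pos |]; lra).
  destruct (Rle_or_lt (lamZ + sig) p) as [Hlarge | Hsmall].
  - assert (f2 (lamZ + sig) <= f2 p) by (apply (response_le f2 thr2 hf2); lra).
    assert (g2 * f2 (lamZ + sig) <= g2 * f2 p) by (apply Rmult_le_compat_l; lra).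
    lra.
  - assert (sig ^ 2 / (2 * g1 ^ 2) <= R2) by (apply far_from_equilibrium; lra).
    assert (k2 * D1 * (sig ^ 2 / (2 * g1 ^ 2)) <= k2 * D1 * R2)
      by (apply Rmult_le_compat_l; [apply Rmult_le_pos |]; lra).
    assert (0 <= g2 * f2 p) by (apply Rmult_le_pos; [lra | apply (response_nonneg f2 thr2 hf2); lra]).
    lra.
Qed.

Lemma lnZ_drift Sm : 0 < Sm -> exists e C k k2, 0 < e /\ 0 < C /\ 0 < k /\ 0 < k2 /\
  forall n p z, box Sm n p z -> e - C * z <= fZ p z / z - lyap_rate k k2 n p z.
Proof.
  intros HSm.
  destruct (response_bounded f2 thr2 hf2) as [F2 [HF2 HF2b]].
  destruct (response_le_lin f2 thr2 hf2) as [K2 [HK2 HK2b]].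
  destruct (consumption_gap_ge Sm HSm) as [kap [Hkap Hgap]].
  pose proof P1_gt_lamZ as HP1. pose proof Q1_pos as HQ1.
  set (sig := (P1 - lamZ) / 2).
  assert (Hsig : 0 < sig) by (unfold sig; lra).
  set (e := g2 * f2 (lamZ + sig) - D2).
  assert (He : 0 < e).
  { assert (Hlt : f2 lamZ < f2 (lamZ + sig)) by (apply (response_lt f2 thr2 hf2); lra).
    rewrite hlamZ in Hlt. apply (Rmult_lt_compat_l g2) in Hlt; [| lra].
    replace (g2 * (D2 / g2)) with D2 in Hlt by (field; lra). unfold e. lra. }
  set (k2 := 2 * g1 ^ 2 * (D2 + e) / (D1 * sig ^ 2)).
  assert (Hk2 : 0 < k2).
  { assert (0 < g1 ^ 2) by (apply pow_lt; lra). assert (0 < sig ^ 2) by (apply pow_lt; lra).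
    unfold k2. apply Rdiv_lt_0_compat; apply Rmult_lt_0_compat; lra. }
  assert (Hk2sig : k2 * D1 * (sig ^ 2 / (2 * g1 ^ 2)) = D2 + e) by (unfold k2; field; split; lra).
  set (a := (D1 - D) ^ 2 / D1).
  assert (Ha : 0 <= a) by (unfold a; apply Rmult_le_pos; [apply pow2_ge_0 | left; apply Rinv_0_lt_compat; lra]).
  set (k := k2 * (a + D1) / kap).
  assert (Hk : 0 < k) by (unfold k; apply Rdiv_lt_0_compat; [apply Rmult_lt_0_compat |]; lra).
  assert (Hkk : k * kap = k2 * (a + D1)) by (unfold k; field; lra).
  set (QB := 2 * Sm + Q1).
  set (C := k * P1 * K2 + 2 * k2 * QB * F2 / g1).
  assert (HC : 0 < C).
  { assert (0 < k * P1 * K2) by (apply Rmult_lt_0_compat; [apply Rmult_lt_0_compat |]; lra).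
    assert (0 < 2 * k2 * QB * F2 / g1).
    { apply Rdiv_lt_0_compat; [| lra].
      apply Rmult_lt_0_compat; [apply Rmult_lt_0_compat; [apply Rmult_lt_0_compat |] |];
        unfold QB; lra. }
    unfold C. lra. }
  exists e, C, k, k2. repeat split; try assumption.
  intros n p z Hin. pose proof (box_Q_bound Sm n p z Hin) as HQB.
  destruct Hin as [[Hn Hn'] [[Hp Hp'] [Hz Hz']]].
  assert (Hfn : 0 < f1 n) by (apply (response_pos f1 thr1 hf1); lra).
  pose proof (response_nonneg f2 thr2 hf2 p ltac:(lra)) as Hfp0.
  pose proof (lyapunov_rate_le n p z kap k k2 K2 F2 QB Hp Hz Hfn Hk Hk2 (Hgap n (conj Hn Hn'))
    Hkk (conj Hfp0 (HK2b p ltac:(lra))) (HF2b p ltac:(lra)) HQB) as Hrate.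
  pose proof (predator_growth_or_far n p sig k2 Hsig ltac:(unfold sig; lra) Hk2 ltac:(lra)
    ltac:(unfold e in Hk2sig; lra)) as Hdichotomy.
  fold C in Hrate. fold e in Hdichotomy.
  assert (HfZ : fZ p z / z = g2 * f2 p - D2) by (unfold fZ; field; lra).
  rewrite HfZ. lra.
Qed.

Lemma lyapunov_deriv N P Z k k2 t : is_solution mu D D1 D2 g1 g2 f1 f2 N P Z ->
  0 < t -> 0 < N t -> 0 < P t ->
  derivable_pt_lim (fun s => lyap k k2 (N s) (P s)) t (lyap_rate k k2 (N t) (P t) (Z t)).
Proof.
  intros Hs Ht HN HP. pose proof lamP_pos.
  assert (Hfn : 0 < f1 (N t)) by (apply (response_pos f1 thr1 hf1); lra).
  pose proof (solution_dN N P Z Hs t Ht) as HdN.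
  pose proof (solution_dP N P Z Hs t Ht) as HdP.
  unfold lyap, lyapV. eapply dlim_eq_val.
  - apply dlim_plus; apply dlim_scal.
    + apply dlim_minus; [apply dlim_plus; [apply dlim_minus |] |].
      * apply dlim_scal, HdN.
      * apply dlim_scal, (dlim_comp (inv_response_integral f1 lamP) N); [exact HdN |].
        apply (inv_response_integral_deriv f1 thr1 hf1); assumption.
      * exact HdP.
      * apply dlim_scal, dlim_ln; [exact HP | exact HdP].
    + apply (dlim_sqr (fun s => N s + P s / g1 - Q1)).
      apply dlim_minus; [apply dlim_plus; [exact HdN | apply (derivable_pt_lim_div_scal P), HdP] |].
      apply dlim_const.
  - unfold lyap_rate, lyapV_rate. field. split; lra.
Qed.

Lemma lyapV_bounded a b c d : 0 < a -> 0 < c ->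
  exists B, forall n p, a <= n <= b -> c <= p <= d -> Rabs (lyapV n p) <= B.
Proof.
  intros Ha Hc. pose proof lamP_pos.
  destruct (continuity_bounded_on (fun n => g1 * n - D1 * inv_response_integral f1 lamP n) a b)
    as [B1 HB1].
  { intros n Hn. eapply dlim_continuity.
    apply dlim_minus; [apply dlim_scal, derivable_pt_lim_id |].
    apply dlim_scal, (inv_response_integral_deriv f1 thr1 hf1); lra. }
  destruct (continuity_bounded_on (fun p => p - P1 * ln p) c d) as [B2 HB2].
  { intros p Hp. eapply dlim_continuity.
    apply dlim_minus; [apply derivable_pt_lim_id | apply dlim_scal, derivable_pt_lim_ln; lra]. }
  exists (B1 + B2). intros n p Hn Hp.
  replace (lyapV n p) with ((g1 * n - D1 * inv_response_integral f1 lamP n) + (p - P1 * ln p))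
    by (unfold lyapV; ring).
  eapply Rle_trans; [apply Rabs_triang |].
  pose proof (HB1 n Hn). pose proof (HB2 p Hp). lra.
Qed.

Lemma lyap_bounded Sm n0 p0 k k2 : 0 < n0 -> 0 < p0 -> 0 <= k -> 0 <= k2 ->
  exists B, forall n p z, box Sm n p z -> n0 <= n -> p0 <= p -> Rabs (lyap k k2 n p) <= B.
Proof.
  intros Hn0 Hp0 Hk Hk2.
  destruct (lyapV_bounded n0 Sm p0 (g1 * Sm) Hn0 Hp0) as [BV HBV].
  exists (k * BV + k2 * (2 * Sm + Q1) ^ 2). intros n p z Hin Hn Hp.
  pose proof (box_Q_bound Sm n p z Hin) as HQB.
  destruct Hin as [[_ Hn'] [[_ Hp'] _]].
  unfold lyap. eapply Rle_trans; [apply Rabs_triang |].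
  rewrite !Rabs_mult, (Rabs_pos_eq k), (Rabs_pos_eq k2), <- RPow_abs by assumption.
  pose proof (HBV n p (conj Hn Hn') (conj Hp Hp')).
  assert (Rabs (n + p / g1 - Q1) ^ 2 <= (2 * Sm + Q1) ^ 2)
    by (apply pow_incr; split; [apply Rabs_pos | exact HQB]).
  apply Rplus_le_compat; apply Rmult_le_compat_l; assumption.
Qed.

Lemma Z_persistence : exists z0, 0 < z0 /\ forall N P Z, pos_solution N P Z ->
  Rbar_locally p_infty (fun t => z0 <= Z t).
Proof.
  destruct solution_eventually_in_box as [Sm [HSm Hbox]].
  destruct N_persistence as [n0 [Hn0 HNp]].
  destruct P_persistence as [p0 [Hp0 HPp]].
  destruct (lnZ_drift Sm HSm) as [e [C [k [k2 [He [HC [Hk [Hk2 Hdrift]]]]]]]].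
  destruct (lyap_bounded Sm n0 p0 k k2 Hn0 Hp0 ltac:(lra) ltac:(lra)) as [B HB].
  set (eta := e / (2 * C)).
  assert (Heta : 0 < eta) by (unfold eta; apply Rdiv_lt_0_compat; lra).
  assert (HCeta : C * eta = e / 2) by (unfold eta; field; lra).
  exists (exp (ln eta - 2 * B - 1)). split; [apply exp_pos |].
  intros N P Z Hsol. pose proof (proj1 Hsol) as Hs.
  apply eventually_exp_le.
  - apply (eventually_above_of_drift (fun t => ln (Z t)) (fun s => lyap k k2 (N s) (P s))
      (fun t => fZ (P t) (Z t) / Z t - lyap_rate k k2 (N t) (P t) (Z t))
      (ln eta) (e / 2) B 1 ltac:(lra) ltac:(lra)).
    generalize (filter_and _ _ (filter_and _ _ (Hbox N P Z Hsol) (HNp N P Z Hsol)) (HPp N P Z Hsol)).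
    apply filter_imp. intros t [[[Ht Hin] HnN] HpP].
    pose proof (HB _ _ _ Hin HnN HpP) as HU.
    pose proof (Hdrift _ _ _ Hin) as Hrate.
    destruct Hin as [[HN _] [[HP _] [HZ _]]].
    repeat split; [exact HU | |].
    + apply dlim_minus; [apply dlim_ln; [exact HZ | apply (solution_dZ N P Z Hs t Ht)] |].
      apply lyapunov_deriv; assumption.
    + intros Hlow. apply ln_lt_inv in Hlow; [| exact HZ | exact Heta].
      assert (C * Z t <= e / 2) by (rewrite <- HCeta; apply Rmult_le_compat_l; lra).
      lra.
  - generalize (Hbox N P Z Hsol). apply filter_imp. intros t [_ [_ [_ [HZ _]]]]. exact HZ.
Qed.

Lemma uniform_persistence : exists eps, 0 < eps /\ forall N P Z, pos_solution N P Z ->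
  liminf_ge N eps /\ liminf_ge P eps /\ liminf_ge Z eps.
Proof.
  destruct N_persistence as [n0 [Hn0 HN]].
  destruct P_persistence as [p0 [Hp0 HP]].
  destruct Z_persistence as [z0 [Hz0 HZ]].
  set (eps := Rmin n0 (Rmin p0 z0)).
  pose proof (Rmin_l n0 (Rmin p0 z0)). pose proof (Rmin_r n0 (Rmin p0 z0)).
  pose proof (Rmin_l p0 z0). pose proof (Rmin_r p0 z0).
  exists eps. split; [unfold eps; repeat apply Rmin_glb_lt; assumption |].
  intros N P Z Hsol. repeat split; apply liminf_ge_of_eventually.
  - generalize (HN N P Z Hsol). apply filter_imp. intros t Ht. unfold eps. lra.
  - generalize (HP N P Z Hsol). apply filter_imp. intros t Ht. unfold eps. lra.
  - generalize (HZ N P Z Hsol). apply filter_imp. intros t Ht. unfold eps. lra.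
Qed.

End Chemostat.

Lemma mu_c1_ge_lamP D g1 D1 lamP lamZ : 0 < D -> 0 < g1 -> 0 < D1 -> 0 <= lamZ ->
  lamP <= mu_c1 D g1 D1 lamP lamZ.
Proof.
  intros HD Hg1 HD1 HlamZ. unfold mu_c1.
  assert (0 <= D1 * lamZ / (D * g1))
    by (apply Rmult_le_pos; [nra | left; apply Rinv_0_lt_compat; nra]).
  lra.
Qed.

Theorem theorem2p6
  (D D1 D2 gamma1 gamma2 mu : R) (f1 f2 : R -> R) (lamP lamZ : R)
  (hD : 0 < D) (hD1 : 0 < D1) (hD2 : 0 < D2)
  (hg1 : 0 < gamma1) (hg2 : 0 < gamma2) (hmu : 0 < mu)
  (hf1 : response_fun f1 (Rmax D D1 / gamma1))
  (hf2 : response_fun f2 (Rmax D D2 / gamma2))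
  (hlamP : 0 <= lamP /\ f1 lamP = D1 / gamma1)
  (hlamZ : 0 <= lamZ /\ f2 lamZ = D2 / gamma2)
  (hmuc : mu > mu_c1 D gamma1 D1 lamP lamZ) :
  exists eps, 0 < eps /\
    forall N P Z : R -> R,
      is_solution mu D D1 D2 gamma1 gamma2 f1 f2 N P Z ->
      0 < N 0 -> 0 < P 0 -> 0 < Z 0 ->
      liminf_ge N eps /\ liminf_ge P eps /\ liminf_ge Z eps.
Proof.
  destruct hlamP as [HlamP0 HlamP], hlamZ as [HlamZ0 HlamZ].
  assert (HlamP_mu : lamP < mu)
    by (pose proof (mu_c1_ge_lamP D gamma1 D1 lamP lamZ hD hg1 hD1 HlamZ0); lra).
  destruct (uniform_persistence D D1 D2 gamma1 gamma2 mu _ _ f1 f2 hD hD1 hD2 hg1 hg2 hmu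
    hf1 hf2 lamP HlamP0 HlamP HlamP_mu lamZ HlamZ0 HlamZ hmuc) as [eps [Heps Hpers]].
  exists eps. split; [exact Heps |].
  intros N P Z Hs HN HP HZ. exact (Hpers N P Z (conj Hs (conj HN (conj HP HZ)))).
Qed.
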